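(* Let $\mathcal{S}=(U,\mathcal{P})$ be a relational schema with finite domain $U$, let $D=D^n\cup D^x$ be a database instance (split into endogenous tuples $D^n$ and exogenous tuples $D^x$), let $\mathcal{Q}$ be a Boolean first-order query, and let $\tau\in D^n$. Then the causal effect of $\tau$ on $\mathcal{Q}$ in $D$ satisfies $\mathcal{E}^D_{\tau,\mathcal{Q}}\geq 0$.
   Context: A database instance is a finite set of ground atoms (tuples) $P(c_1,\dots,c_n)$ with $P\in\mathcal{P}$ of arity $n$ and $c_i\in U$; it is partitioned as $D=D^n\cup D^x$ into endogenous and exogenous tuples. Lineage: for every potential tuple $\tau$ introduce a propositional variable $X_\tau$. The lineage $\Phi_{\mathcal{Q}}$ of a Boolean FO query is defined inductively: $\Phi_\tau:=X_\tau$ for an atom $\tau$; $\Phi_{a=a}:=\mathit{true}$; $\Phi_{a=b}:=\mathit{false}$ for distinct constants; $\Phi_{\mathcal{Q}_1\wedge\mathcal{Q}_2}:=\Phi_{\mathcal{Q}_1}\wedge\Phi_{\mathcal{Q}_2}$; $\Phi_{\mathcal{Q}_1\vee\mathcal{Q}_2}:=\Phi_{\mathcal{Q}_1}\vee\Phi_{\mathcal{Q}_2}$; $\Phi_{\exists x\,\mathcal{Q}}:=\bigvee_{c\in U}\Phi_{\mathcal{Q}[c/x]}$; $\Phi_{\neg\mathcal{Q}}:=\neg\Phi_{\mathcal{Q}}$. Assuming negation occurs only in front of variables, the $D$-lineage $\Phi_{\mathcal{Q}}(D)$ is obtained from $\Phi_{\mathcal{Q}}$ by replacing each positive occurrence of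 $X_\tau$ with $\tau\notin D$ by $\mathit{false}$, and each literal $\neg X_\tau$ with $\tau\in D$ by $\mathit{false}$. Standing assumptions: (a) no variable occurs both positively and negatively in $\Phi_{\mathcal{Q}}(D)$; (b) every $\tau\notin D$ whose variable occurs negatively in $\Phi_{\mathcal{Q}}(D)$ is regarded as endogenous. Let $\mathit{Var}(\Phi_{\mathcal{Q}}(D))$ be its set of variables; the exogenous ones (those of tuples in $D^x$) split into positively occurring ones $\mathit{Var}^{x,+}$ and negatively occurring ones $\mathit{Var}^{x,-}$. Probability space: $\Omega$ is the set of all truth assignments $\sigma:\mathit{Var}(\Phi_{\mathcal{Q}}(D))\to\{0,1\}$ with the uniform distribution $P$. The query is the random variable $\mathcal{Q}(\sigma)=1$ iff $\sigma\models\Phi_{\mathcal{Q}}(D)$. For a variable $X$ and $x\in\{0,1\}$, the event $\mathit{do}(X=x)$ is $\{\sigma\in\Omega:\sigma(X)=x\}$. For an endogenous $\tau$, $E(\mathcal{Q}\mid \mathit{do}(X_\tau=v))$ denotes the conditional expectation of $\mathcal{Q}$ given the intersection of $\mathit{do}(X_\tau=v)$ with all $\mathit{do}(X_{\tau'}=1)$ for $X_{\tau'}\in\mathit{Var}^{x,+}$ and all $\mathit{do}(X_{\tau'}=0)$ for $X_{\tau'}\in\mathit{Var}^{x,-}$. The causal effect of $\tau$ on $\mathcal{Q}$ in $D$ is $\mathcal{E}^D_{\tau,\mathcal{Q}}:=E(\mathcal{Q}\mid\mathit{do}(X_\tau=v))-E(\mathcal{Q}\mid\mathit{do}(X_\tau=1-v))$,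 where $v=1$ if $\tau\in D$ and $v=0$ if $\tau\notin D$. *)

From mathcomp Require Import all_boot all_order all_algebra.
Set Implicit Arguments. Unset Strict Implicit. Unset Printing Implicit Defensive.
Import GRing.Theory Num.Theory.

Definition gtuple (U P : finType) (ar : P -> nat) : finType :=
  {p : P & (ar p).-tuple U}.

Inductive term (U : Type) : Type :=
| TVar of nat
| TConst of U.

Inductive query (U P : Type) (ar : P -> nat) : Type :=
| QAtom (p : P) of (ar p).-tuple (term U)
| QEq of term U & term U
| QAnd of query U ar & query U ar
| QOr of query U ar & query U ar
| QNot of query U ar
| QEx of nat & query U ar.

Section Syntax.
Context (U P : Type) (ar : P -> nat).

Fixpoint free_vars (q : query U ar) : seq nat :=
  match q with
  | QAtom _ ts => [seq x | x <- [seq (if t is TVar x then [:: x] else [::]) | t <- ts] , x <- x]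
  | QEq t1 t2 => (if t1 is TVar x then [:: x] else [::]) ++ (if t2 is TVar x then [:: x] else [::])
  | QAnd q1 q2 | QOr q1 q2 => free_vars q1 ++ free_vars q2
  | QNot q1 => free_vars q1
  | QEx x q1 => [seq y <- free_vars q1 | y != x]
  end.

Definition boolean_query (q : query U ar) : Prop := free_vars q = [::].
End Syntax.

Inductive form (X : Type) : Type :=
| FVar of X
| FTrue
| FFalse
| FNot of form X
| FAnd of form X & form X
| FOr of form X & form X.

Arguments FTrue {X}.
Arguments FFalse {X}.

Section Lineage.
Context (U P : finType) (ar : P -> nat).
Local Notation tup := (gtuple U ar).

Definition subst_term (s : nat -> option U) (t : term U) : option U :=
  match t with TConst c => Some c | TVar x => s x end.

Definition upd (s : nat -> option U) (x : nat) (c : U) : nat -> option U :=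
  fun y => if y == x then Some c else s y.

(* lin s q is the lineage Phi_{q[s]} of q after substituting s.
   For a closed query, Phi_Q := lin (fun _ => None) Q; the clause for
   QEx implements Phi_{exists x Q} = \/_{c in U} Phi_{Q[c/x]}.
   (Non-ground atoms/equalities never occur for closed queries.) *)
Fixpoint lin (s : nat -> option U) (q : query U ar) : form tup :=
  match q with
  | QAtom p ts =>
      match insub (pmap id [seq subst_term s t | t <- ts]) : option ((ar p).-tuple U) with
      | Some tu => FVar (Tagged (fun p => (ar p).-tuple U) tu)
      | None => FFalse
      end
  | QEq t1 t2 =>
      match subst_term s t1, subst_term s t2 with
      | Some a, Some b => if a == b then FTrue else FFalse
      | _, _ => FFalse
      end
  | QAnd q1 q2 => FAnd (lin s q1) (lin s q2)
  | QOr q1 q2 => FOr (lin s q1) (lin s q2)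
  | QNot q1 => FNot (lin s q1)
  | QEx x q1 => foldr (fun c acc => FOr (lin (upd s x c) q1) acc) FFalse (enum U)
  end.

Definition lineage (q : query U ar) : form tup := lin (fun _ => None) q.
End Lineage.

Section Formulas.
Context (X : finType).

Fixpoint neg_only_vars (f : form X) : bool :=
  match f with
  | FNot (FVar _) => true
  | FNot _ => false
  | FAnd f1 f2 | FOr f1 f2 => neg_only_vars f1 && neg_only_vars f2
  | _ => true
  end.

Fixpoint dlin (D : {set X}) (f : form X) : form X :=
  match f with
  | FVar t => if t \in D then FVar t else FFalse
  | FNot (FVar t) => if t \in D then FFalse else FNot (FVar t)
  | FNot g => FNot (dlin D g)
  | FAnd f1 f2 => FAnd (dlin D f1) (dlin D f2)
  | FOr f1 f2 => FOr (dlin D f1) (dlin D f2)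
  | g => g
  end.

Fixpoint posvars (f : form X) : {set X} :=
  match f with
  | FVar t => [set t]
  | FNot g => negvars g
  | FAnd f1 f2 | FOr f1 f2 => posvars f1 :|: posvars f2
  | _ => set0
  end
with negvars (f : form X) : {set X} :=
  match f with
  | FNot g => posvars g
  | FAnd f1 f2 | FOr f1 f2 => negvars f1 :|: negvars f2
  | _ => set0
  end.

Definition vars (f : form X) : {set X} := posvars f :|: negvars f.

Fixpoint eval (sigma : X -> bool) (f : form X) : bool :=
  match f with
  | FVar t => sigma t
  | FTrue => true
  | FFalse => false
  | FNot g => ~~ eval sigma g
  | FAnd f1 f2 => eval sigma f1 && eval sigma f2
  | FOr f1 f2 => eval sigma f1 || eval sigma f2
  end.

(* Truth assignments on a finite set of variables W, represented as
   functions X -> bool that are constantly false outside W (a bijection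
   with W -> bool).  The distribution is uniform. *)
Definition Omega (W : {set X}) : {set {ffun X -> bool}} :=
  [set sigma : {ffun X -> bool} | [forall t, (t \notin W) ==> ~~ sigma t]].

(* Conditional expectation of the query random variable [eval _ f]
   given an event A (a subset of Omega W), under the uniform distribution:
   E(Q | A) = P(Q = 1 /\ A) / P(A) = #|{sigma in A | sigma |= f}| / #|A|
   (set to 0 if P(A) = 0). *)
Definition cond_exp (W : {set X}) (f : form X) (A : {set {ffun X -> bool}}) : rat :=
  let B := Omega W :&: A in
  (#|[set sigma in B | eval sigma f]|%:R / #|B|%:R)%R.

Definition do_ev (t : X) (x : bool) : {set {ffun X -> bool}} :=
  [set sigma : {ffun X -> bool} | sigma t == x].
End Formulas.

Section CausalEffect.
Context (U P : finType) (ar : P -> nat).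
Local Notation tup := (gtuple U ar).

(* Sample space variables: Var(Phi_Q(D)), together with X_tau itself
   (this only matters when X_tau does not occur). *)
Definition sample_vars (Dn Dx : {set tup}) (q : query U ar) (tau : tup) : {set tup} :=
  vars (dlin (Dn :|: Dx) (lineage q)) :|: [set tau].

Definition exo_ev (Dn Dx : {set tup}) (q : query U ar) : {set {ffun tup -> bool}} :=
  let Phi := dlin (Dn :|: Dx) (lineage q) in
  [set sigma : {ffun tup -> bool} |
     [forall t in posvars Phi :&: Dx, sigma t] &&
     [forall t in negvars Phi :&: Dx, ~~ sigma t]].

Definition E_do (Dn Dx : {set tup}) (q : query U ar) (tau : tup) (v : bool) : rat :=
  cond_exp (sample_vars Dn Dx q tau) (dlin (Dn :|: Dx) (lineage q))
    (do_ev tau v :&: exo_ev Dn Dx q).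

Definition causal_effect (Dn Dx : {set tup}) (q : query U ar) (tau : tup) : rat :=
  let v := tau \in Dn :|: Dx in
  (E_do Dn Dx q tau v - E_do Dn Dx q tau (~~ v))%R.
End CausalEffect.

From Pilot Require Import Defs.
From mathcomp Require Import all_boot all_order all_algebra.
Import GRing.Theory Num.Theory.

(* Since tau is endogenous and in D, X_tau never occurs negatively in the
   D-lineage, so the query is monotone in X_tau.  Setting X_tau to 1 is a
   bijection from the assignments with X_tau = 0 onto those with X_tau = 1
   that preserves the exogenous conditioning and maps models of the
   lineage to models; hence both conditioning events have the same size
   and the second one contains at least as many models. *)

Set Implicit Arguments.
Unset Strict Implicit.
Unset Printing Implicit Defensive.

Section Assignments.
Variable X : finType.
Implicit Types (f : Defs.form X) (s : {ffun X -> bool}) (t : X) (b : bool).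

Lemma eval_mono f (s s' : X -> bool) :
  {in posvars f, forall t, s t ==> s' t} ->
  {in negvars f, forall t, s' t ==> s t} ->
  eval s f ==> eval s' f.
Proof.
elim: f s s' => [t|||g IHg|f1 IH1 f2 IH2|f1 IH1 f2 IH2] s s' /= hpos hneg.
- by apply: hpos; rewrite set11.
- by [].
- by [].
- by have := IHg s' s hneg hpos; case: (eval s g); case: (eval s' g).
all: have h1 := IH1 s s' (fun u hu => hpos u (subsetP (subsetUl _ _) u hu))
                        (fun u hu => hneg u (subsetP (subsetUl _ _) u hu)).
all: have h2 := IH2 s s' (fun u hu => hpos u (subsetP (subsetUr _ _) u hu))
                        (fun u hu => hneg u (subsetP (subsetUr _ _) u hu)).
all: by move: h1 h2; do 2 case: (eval s _); do 2 case: (eval s' _).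
Qed.

Lemma negvars_dlin (D : {set X}) f t :
  neg_only_vars f -> t \in negvars (dlin D f) -> t \notin D.
Proof.
elim: f => [u|||g _|f1 IH1 f2 IH2|f1 IH1 f2 IH2] /=.
- by case: (u \in D); rewrite /= in_set0.
- by rewrite in_set0.
- by rewrite in_set0.
- case: g => //= u _; case uD: (u \in D); rewrite /= ?in_set0 //.
  by rewrite in_set1 => /eqP ->; rewrite uD.
- by case/andP=> h1 h2; rewrite in_setU => /orP[/IH1|/IH2]; auto.
- by case/andP=> h1 h2; rewrite in_setU => /orP[/IH1|/IH2]; auto.
Qed.

Definition setvar t b (s : {ffun X -> bool}) : {ffun X -> bool} :=
  [ffun u => if u == t then b else s u].

Lemma setvar_inj t b : {in do_ev t (~~ b) &, injective (setvar t b)}.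
Proof.
move=> s1 s2; rewrite !inE => /eqP s1t /eqP s2t /ffunP e; apply/ffunP => u.
by have := e u; rewrite !ffunE; case: eqP => [->|] // _; rewrite s1t s2t.
Qed.

Lemma card_setvar_le t b (A B : {set {ffun X -> bool}}) :
  A \subset do_ev t (~~ b) -> {in A, forall s, setvar t b s \in B} ->
  #|A| <= #|B|.
Proof.
move=> /subsetP Ado AB; rewrite -(card_in_imset (sub_in2 Ado (@setvar_inj t b))).
by apply/subset_leq_card/subsetP => _ /imsetP[s As ->]; exact: AB.
Qed.

Definition setvar_closed t (A : {set {ffun X -> bool}}) :=
  forall b s, s \in A -> setvar t b s \in A.

Lemma setvar_closedI t A B :
  setvar_closed t A -> setvar_closed t B -> setvar_closed t (A :&: B).
Proof. by move=> hA hB b s; rewrite !inE => /andP[/hA-> /hB->]. Qed.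

Lemma setvar_closed_Omega t (W : {set X}) : t \in W -> setvar_closed t (Omega W).
Proof.
move=> tW b s; rewrite !inE => /forall_inP sW; apply/forall_inP => u uW.
by rewrite ffunE; case: eqP => [eut|_]; [rewrite eut tW in uW | exact: sW].
Qed.

Lemma eval_setvar_true f t s :
  t \notin negvars f -> eval s f -> eval (setvar t true s) f.
Proof.
move=> tneg; apply/implyP/eval_mono => u.
  by rewrite ffunE; case: eqP => _; rewrite ?implybT ?implybb.
move=> uneg; rewrite ffunE; case: eqP => [eut|_]; last exact: implybb.
by rewrite -eut uneg in tneg.
Qed.

Lemma cond_exp_setvar_mono (W : {set X}) f t A :
  t \in W -> t \notin negvars f -> setvar_closed t A ->
  (cond_exp W f (do_ev t false :&: A) <= cond_exp W f (do_ev t true :&: A))%R.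
Proof.
move=> tW tneg closedA; rewrite /cond_exp.
set C := Omega W :&: A.
have closedC : setvar_closed t C by exact: setvar_closedI (setvar_closed_Omega tW) closedA.
have setI_do b : Omega W :&: (do_ev t b :&: A) = C :&: do_ev t b.
  by rewrite setIA setIAC.
rewrite !setI_do.
have do_sub b : C :&: do_ev t b \subset do_ev t b by exact: subsetIr.
have Cset b s : s \in C :&: do_ev t (~~ b) -> setvar t b s \in C :&: do_ev t b.
  by case/setIP=> Cs _; apply/setIP; split; [exact: closedC | rewrite inE ffunE eqxx].
have card_do : #|C :&: do_ev t false| = #|C :&: do_ev t true|.
  by apply/eqP; rewrite eqn_leq (@card_setvar_le t true _ _ (do_sub false) (Cset true))
                               (@card_setvar_le t false _ _ (do_sub true) (Cset false)).
have card_models : #|[set s in C :&: do_ev t false | eval s f]| <=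
                   #|[set s in C :&: do_ev t true | eval s f]|.
  apply: (@card_setvar_le t true).
    by apply/subsetP => s; rewrite inE in_setI => /andP[/andP[_ ->]].
  move=> s; rewrite inE => /andP[Cs sf].
  by rewrite inE Cset ?eval_setvar_true.
by rewrite card_do ler_wpM2r ?invr_ge0 ?ler0n ?ler_nat.
Qed.
End Assignments.

Lemma setvar_closed_exo_ev (U P : finType) (ar : P -> nat)
    (Dn Dx : {set gtuple U ar}) (q : query U ar) t :
  t \notin Dx -> setvar_closed t (exo_ev Dn Dx q).
Proof.
move=> tDx b s; rewrite !inE => /andP[/forall_inP hpos /forall_inP hneg].
have setvar_Dx u : u \in Dx -> setvar t b s u = s u.
  by move=> uDx; rewrite ffunE; case: eqP => // eut; rewrite -eut uDx in tDx.
apply/andP; split; apply/forall_inP => u /[dup] uI;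
  rewrite in_setI => /andP[_ /setvar_Dx ->]; [exact: hpos | exact: hneg].
Qed.

Theorem proposition1 (U P : finType) (ar : P -> nat)
    (Dn Dx : {set gtuple U ar}) (q : query U ar) (tau : gtuple U ar) :
  [disjoint Dn & Dx] ->
  boolean_query q ->
  (* negation occurs only in front of variables in Phi_Q *)
  neg_only_vars (lineage q) ->
  (* standing assumption (a) *)
  [disjoint posvars (dlin (Dn :|: Dx) (lineage q))
          & negvars (dlin (Dn :|: Dx) (lineage q))] ->
  tau \in Dn ->
  (0 <= causal_effect Dn Dx q tau)%R.
Proof.
move=> disjD _ neg_only _ tauDn.
have tauD : tau \in Dn :|: Dx by rewrite in_setU tauDn.
have tauDx : tau \notin Dx by rewrite (disjointFr disjD tauDn).
have tau_neg : tau \notin negvars (dlin (Dn :|: Dx) (lineage q)).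
  by apply/negP => /(negvars_dlin neg_only); rewrite tauD.
have tauW : tau \in sample_vars Dn Dx q tau by rewrite in_setU set11 orbT.
rewrite /causal_effect tauD subr_ge0 /E_do.
exact: cond_exp_setvar_mono tauW tau_neg (setvar_closed_exo_ev tauDx).
Qed.
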